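(* Fix $\alpha\in(0,1/2)$ and $q_1,q_3\in(0,1)$. Define $m^*(3/4,3/4)=16\alpha$, $m^*(3/4,1/4)=m^*(1/4,3/4)=\frac{8(1-2\alpha)}{3}$, $m^*(1/4,1/4)=\frac{16\alpha}{9}$, $m^*=\frac{16(4\alpha+3)}{9}$, $\overline{q}^*=\frac{8\alpha+3}{8\alpha+6}$, $\overline{\lambda}^*=1/m^*$, $$\overline{q}=\frac{1}{m^*}\Big[\big(m^*(\tfrac34,\tfrac34)+m^*(\tfrac34,\tfrac14)\big)q_3+\big(m^*(\tfrac14,\tfrac34)+m^*(\tfrac14,\tfrac14)\big)q_1\Big],$$ $$\overline{\lambda}=\frac{1}{m^*}\Big(m^*(\tfrac34,\tfrac34)\tfrac{1-q_3}{4}+m^*(\tfrac34,\tfrac14)\tfrac{3(1-q_3)}{4}+m^*(\tfrac14,\tfrac34)\tfrac{1-q_1}{4}+m^*(\tfrac14,\tfrac14)\tfrac{3(1-q_1)}{4}\Big),$$ $M=\frac{2(4\alpha+1)}{3(1-q_3)}+\frac{2(3-4\alpha)}{3(1-q_1)}$ and $Q=\big(q_3\frac{2(4\alpha+1)}{3(1-q_3)}+q_1\frac{2(3-4\alpha)}{3(1-q_1)}\big)/M$. Suppose either (1) $\alpha>1/4$, $(12\alpha+3)q_3+(3-4\alpha)q_1>8\alpha+3$ and $\frac{4\alpha+1}{1-q_3}+\frac{3-4\alpha}{1-q_1}<\frac{8(4\alpha+3)}{3}$; or (2) $\alpha\le 1/4$, $6q_3+2q_1>5$ and $\frac{4\alpha+1}{1-q_3}+\frac{3-4\alpha}{1-q_1}<\frac{8(4\alpha+3)}{3}$.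 Then $\overline{q}>\overline{q}^*$ and $\overline{\lambda}<\overline{\lambda}^*$, while the treatment's steady-state performance is worse than the status quo's: $M<m^*$ and $Q<\overline{q}^*$.
   Context: Model: user types $(x,e)\in\{1/4,3/4\}^2$ with per-period inflow masses $\alpha$ for $(3/4,3/4)$ and $(1/4,1/4)$ and $1/2-\alpha$ for $(3/4,1/4)$ and $(1/4,3/4)$; an algorithm gives quality $q(x)\in(0,1)$ to segment $x$ and a type-$(x,e)$ user churns each period with probability $(1-q(x))(1-e)$; the steady-state mass of type $(x,e)$ is $F(x,e)/((1-q(x))(1-e))$. The status quo is $q^*(x)=x$ with steady-state masses $m^*(x,e)$, total $m^*$, ARQ $\overline{q}^*$ and churn rate $\overline{\lambda}^*$. The treatment has $q(1/4)=q_1,q(3/4)=q_3$; $\overline{q},\overline{\lambda}$ are its ARQ and churn rate observed in a one-period experiment on the status quo population; $M,Q$ are its own steady-state total population and ARQ. *)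

From Stdlib Require Import Reals.
Open Scope R_scope.

Definition m33 (a : R) : R := 16 * a.
Definition m31 (a : R) : R := 8 * (1 - 2 * a) / 3.
Definition m13 (a : R) : R := 8 * (1 - 2 * a) / 3.
Definition m11 (a : R) : R := 16 * a / 9.
Definition mstar (a : R) : R := 16 * (4 * a + 3) / 9.
Definition qbarstar (a : R) : R := (8 * a + 3) / (8 * a + 6).
Definition lambdastar (a : R) : R := 1 / mstar a.

Definition qbar (a q1 q3 : R) : R :=
  / mstar a * ((m33 a + m31 a) * q3 + (m13 a + m11 a) * q1).
Definition lambdabar (a q1 q3 : R) : R :=
  / mstar a * (m33 a * ((1 - q3) / 4) + m31 a * (3 * (1 - q3) / 4)
             + m13 a * ((1 - q1) / 4) + m11 a * (3 * (1 - q1) / 4)).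

Definition Mtreat (a q1 q3 : R) : R :=
  2 * (4 * a + 1) / (3 * (1 - q3)) + 2 * (3 - 4 * a) / (3 * (1 - q1)).
Definition Qtreat (a q1 q3 : R) : R :=
  (q3 * (2 * (4 * a + 1) / (3 * (1 - q3))) + q1 * (2 * (3 - 4 * a) / (3 * (1 - q1))))
  / Mtreat a q1 q3.

From Stdlib Require Import Reals Lra Psatz.
Open Scope R_scope.

(* Write x = 1 - q3 and y = 1 - q1 for the two segments' quality gaps.  The
   treatment's steady-state population is 2/3 ((4a+1)/x + (3-4a)/y), a convex
   function of (x, y) whose level set {M = m*} passes through the status quo
   (x, y) = (1/4, 3/4).  Hence {M < m*} lies strictly on one side of the tangent
   line there.  The experiment's ARQ gain and churn drop are two more half-planes
   bounded by lines through the status quo; inside the tangent half-plane the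
   ARQ gain implies the churn drop when a > 1/4, and conversely when a <= 1/4.
   Finally Q = 1 - (8/3)/M and q* = 1 - (8/3)/m*, so Q < q* is
   equivalent to M < m*. *)

Lemma tangent_le_inv (c x : R) : 0 < c -> 0 < x -> 2 / c - x / c ^ 2 <= / x.
Proof.
  intros Hc Hx.
  assert (Hgap : / x - (2 / c - x / c ^ 2) = (x - c) ^ 2 * / (c ^ 2 * x))
    by (field; lra).
  assert (0 <= (x - c) ^ 2 * / (c ^ 2 * x)).
  { apply Rmult_le_pos; [apply pow2_ge_0 |].
    left; apply Rinv_0_lt_compat, Rmult_lt_0_compat; [apply pow_lt |]; lra. }
  lra.
Qed.

Lemma tangent_bound_of_steady_state (a x y : R) :
  0 < a < 3 / 4 -> 0 < x -> 0 < y ->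
  (4 * a + 1) / x + (3 - 4 * a) / y < 8 * (4 * a + 3) / 3 ->
  9 * (4 * a + 1) * x + (3 - 4 * a) * y > 3 * (4 * a + 3) / 2.
Proof.
  intros Ha Hx Hy Hsteady.
  assert (Hx_inv : 8 - 16 * x <= / x).
  { replace (8 - 16 * x) with (2 / (1 / 4) - x / (1 / 4) ^ 2) by field.
    apply tangent_le_inv; lra. }
  assert (Hy_inv : 8 / 3 - 16 * y / 9 <= / y).
  { replace (8 / 3 - 16 * y / 9) with (2 / (3 / 4) - y / (3 / 4) ^ 2) by field.
    apply tangent_le_inv; lra. }
  unfold Rdiv in Hsteady.
  assert ((4 * a + 1) * (8 - 16 * x) <= (4 * a + 1) * / x)
    by (apply Rmult_le_compat_l; lra).
  assert ((3 - 4 * a) * (8 / 3 - 16 * y / 9) <= (3 - 4 * a) * / y)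
    by (apply Rmult_le_compat_l; lra).
  lra.
Qed.

Section Wedge.

Variables a q1 q3 : R.

Hypothesis tangent_bound :
  9 * (4 * a + 1) * (1 - q3) + (3 - 4 * a) * (1 - q1) > 3 * (4 * a + 3) / 2.

Lemma churn_drop_of_arq_gain :
  1 / 4 < a < 3 / 4 ->
  (12 * a + 3) * q3 + (3 - 4 * a) * q1 > 8 * a + 3 -> 6 * q3 + 2 * q1 > 5.
Proof.
  intros Ha Harq.
  assert (Hq3 : (24 * a + 6) * (3 / 4 - q3) > 0) by lra.
  assert (q3 < 3 / 4) by nra.
  assert ((3 - 4 * a) * (6 * q3 + 2 * q1 - 5) > 12 * (1 - 4 * a) * (q3 - 3 / 4))
    by lra.
  nra.
Qed.

Lemma arq_gain_of_churn_drop :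
  0 < a <= 1 / 4 ->
  6 * q3 + 2 * q1 > 5 -> (12 * a + 3) * q3 + (3 - 4 * a) * q1 > 8 * a + 3.
Proof.
  intros Ha Hchurn.
  assert (Hq1 : (3 - 4 * a) * q1 > (3 - 4 * a) * ((5 - 6 * q3) / 2)) by nra.
  assert (Hq3 : 48 * a * (3 / 4 - q3) > 0) by nra.
  assert (q3 < 3 / 4) by nra.
  nra.
Qed.

End Wedge.

Lemma qbar_eq (a q1 q3 : R) :
  4 * a + 3 <> 0 ->
  qbar a q1 q3 = ((12 * a + 3) * q3 + (3 - 4 * a) * q1) / (8 * a + 6).
Proof.
  intros Ha; unfold qbar, mstar, m33, m31, m13, m11; field; lra.
Qed.

Lemma lambdabar_eq (a q1 q3 : R) :
  4 * a + 3 <> 0 ->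
  lambdabar a q1 q3 = (2 * (1 - q3) + 2 * (1 - q1) / 3) * lambdastar a.
Proof.
  intros Ha; unfold lambdabar, lambdastar, mstar, m33, m31, m13, m11; field; lra.
Qed.

Lemma Mtreat_eq (a q1 q3 : R) :
  q1 <> 1 -> q3 <> 1 ->
  Mtreat a q1 q3 = 2 / 3 * ((4 * a + 1) / (1 - q3) + (3 - 4 * a) / (1 - q1)).
Proof.
  intros Hq1 Hq3; unfold Mtreat; field; lra.
Qed.

Lemma Mtreat_gt0 (a q1 q3 : R) :
  -1 / 4 < a < 3 / 4 -> q1 < 1 -> q3 < 1 -> 0 < Mtreat a q1 q3.
Proof.
  intros Ha Hq1 Hq3; unfold Mtreat.
  assert (0 < 2 * (4 * a + 1) / (3 * (1 - q3))) by (apply Rdiv_lt_0_compat; lra).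
  assert (0 < 2 * (3 - 4 * a) / (3 * (1 - q1))) by (apply Rdiv_lt_0_compat; lra).
  lra.
Qed.

(* 8/3 is the total weight 2(4a+1)/3 + 2(3-4a)/3 of the two segments. *)
Lemma Qtreat_eq (a q1 q3 : R) :
  q1 <> 1 -> q3 <> 1 -> Mtreat a q1 q3 <> 0 ->
  Qtreat a q1 q3 = 1 - (8 / 3) / Mtreat a q1 q3.
Proof.
  intros Hq1 Hq3 HM; unfold Qtreat.
  assert (Hnum : q3 * (2 * (4 * a + 1) / (3 * (1 - q3)))
                 + q1 * (2 * (3 - 4 * a) / (3 * (1 - q1))) = Mtreat a q1 q3 - 8 / 3)
    by (unfold Mtreat; field; lra).
  rewrite Hnum; field; exact HM.
Qed.

Lemma qbarstar_eq (a : R) : 4 * a + 3 <> 0 -> qbarstar a = 1 - (8 / 3) / mstar a.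
Proof.
  intros Ha; unfold qbarstar, mstar; field; lra.
Qed.

Theorem proposition2 (a q1 q3 : R) :
  0 < a < 1 / 2 -> 0 < q1 < 1 -> 0 < q3 < 1 ->
  ((1 / 4 < a /\
    (12 * a + 3) * q3 + (3 - 4 * a) * q1 > 8 * a + 3 /\
    (4 * a + 1) / (1 - q3) + (3 - 4 * a) / (1 - q1) < 8 * (4 * a + 3) / 3)
   \/
   (a <= 1 / 4 /\
    6 * q3 + 2 * q1 > 5 /\
    (4 * a + 1) / (1 - q3) + (3 - 4 * a) / (1 - q1) < 8 * (4 * a + 3) / 3)) ->
  qbar a q1 q3 > qbarstar a /\ lambdabar a q1 q3 < lambdastar a /\
  Mtreat a q1 q3 < mstar a /\ Qtreat a q1 q3 < qbarstar a.
Proof.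
  intros Ha Hq1 Hq3 Hcases.
  assert (Hsteady : (4 * a + 1) / (1 - q3) + (3 - 4 * a) / (1 - q1)
                    < 8 * (4 * a + 3) / 3) by tauto.
  assert (Htangent := tangent_bound_of_steady_state a (1 - q3) (1 - q1)
                        ltac:(lra) ltac:(lra) ltac:(lra) Hsteady).
  assert (Harq : (12 * a + 3) * q3 + (3 - 4 * a) * q1 > 8 * a + 3 /\
                 6 * q3 + 2 * q1 > 5).
  { destruct Hcases as [[Ha4 [Harq _]] | [Ha4 [Hchurn _]]].
    - split; [exact Harq | apply (churn_drop_of_arq_gain a q1 q3); lra].
    - split; [apply (arq_gain_of_churn_drop a q1 q3); lra | exact Hchurn]. }
  destruct Harq as [Harq Hchurn].
  assert (HM : Mtreat a q1 q3 < mstar a)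
    by (rewrite Mtreat_eq by lra; unfold mstar; lra).
  assert (HM0 := Mtreat_gt0 a q1 q3 ltac:(lra) ltac:(lra) ltac:(lra)).
  assert (Hlambda0 : 0 < lambdastar a)
    by (unfold lambdastar, mstar; apply Rdiv_lt_0_compat; lra).
  repeat split.
  - rewrite qbar_eq by lra; unfold qbarstar, Rdiv.
    apply Rmult_gt_compat_r; [apply Rinv_0_lt_compat |]; lra.
  - rewrite lambdabar_eq by lra; nra.
  - exact HM.
  - rewrite Qtreat_eq, qbarstar_eq by lra; unfold Rdiv.
    assert (/ mstar a < / Mtreat a q1 q3) by (apply Rinv_lt_contravar; nra).
    lra.
Qed.
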